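(* Let $\alpha>1$, $1\le m\le d$, $\mathcal{A}=\{a\in\{0,1\}^d:\|a\|_1=m\}$, let $r_1\in\mathbb{R}^d$ have i.i.d. coordinates from $\mathcal{D}_\alpha\in\{\mathcal{P}_\alpha,\mathcal{F}_\alpha\}$, and let $a_1\in\arg\min_{a\in\mathcal{A}}a^\top(-r_1)$. Then $$\mathbb{E}_{r_1\sim\mathcal{D}_\alpha}[a_1^\top r_1]\le\begin{cases}\left(\frac{\alpha}{\alpha-1}m^{1-\frac1\alpha}+\Gamma\left(1-\frac1\alpha\right)\right)(d+1)^{\frac1\alpha}, & \mathcal{D}_\alpha=\mathcal{P}_\alpha,\\[4pt] \left(\frac{\alpha}{\alpha-1}m^{1-\frac1\alpha}+\Gamma\left(1-\frac1\alpha\right)\right)(d+1)^{\frac1\alpha}+m, & \mathcal{D}_\alpha=\mathcal{F}_\alpha.\end{cases}$$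
   Context: Fréchet $\mathcal{F}_\alpha$: CDF $F(x)=e^{-1/x^\alpha}$, $x\ge0$; Pareto $\mathcal{P}_\alpha$: CDF $F(x)=1-x^{-\alpha}$, $x\ge1$. $\Gamma$ is the gamma function. ($a_1^\top r_1$ is the sum of the $m$ largest coordinates of $r_1$.) *)

From HB Require Import structures.
From mathcomp Require Import all_boot all_order all_algebra.
From mathcomp Require Import all_classical all_reals all_analysis.
Set Implicit Arguments. Unset Strict Implicit. Unset Printing Implicit Defensive.
Import Order.TTheory GRing.Theory Num.Theory.
Import numFieldNormedType.Exports.
Local Open Scope classical_set_scope.
Local Open Scope ring_scope.

Definition Gamma (R : realType) (s : R) : R :=
  fine (\int[@lebesgue_measure R]_(t in `]0%R, +oo[) ((t `^ (s - 1)) * expR (- t))%:E).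

Inductive heavy_dist := Pareto | Frechet.

Definition heavy_cdf (R : realType) (D : heavy_dist) (alpha x : R) : R :=
  match D with
  | Pareto => if 1 <= x then 1 - x `^ (- alpha) else 0
  | Frechet => if 0 < x then expR (- x `^ (- alpha)) else 0
  end.

Definition mutually_independent (d0 : measure_display) (T : measurableType d0)
  (R : realType) (P : probability T R) (n : nat) (X : 'I_n -> T -> R) : Prop :=
  forall B : 'I_n -> set R, (forall i, measurable (B i)) ->
    P (\bigcap_(i in [set: 'I_n]) (X i @^-1` B i)) =
    (\prod_(i < n) P (X i @^-1` B i))%E.

(* a^T r for the indicator vector a of a set A of coordinates. *)
Definition inner_ind (R : realType) (n : nat) (A : {set 'I_n}) (r : 'I_n -> R) : R :=
  \sum_(i in A) r i.

(* Action set: indicator vectors with ||a||_1 = m, encoded as sets of size m. *)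
Definition in_action_set (n m : nat) (A : {set 'I_n}) : bool := #|A| == m.

(* For any threshold c, a sum of m coordinates is at most m c plus the total
   excess \sum_i (r_i - c)^+.  Pareto and Frechet tails both satisfy
   P(r_i > y) <= y^-alpha for y >= 1, so the tail formula gives
   E (r_i - c)^+ <= \int_0^oo (x + c)^-alpha dx = c^(1-alpha) / (alpha - 1).
   The choice c = ((d+1)/m)^(1/alpha) balances both terms into
   alpha/(alpha-1) m^(1-1/alpha) (d+1)^(1/alpha); the Gamma term and the
   extra m of the Frechet case are slack. *)

From HB Require Import structures.
From mathcomp Require Import all_boot all_order all_algebra.
From mathcomp Require Import all_classical all_reals all_analysis.
From mathcomp Require Import measurable_realfun ring.
Import Order.TTheory GRing.Theory Num.Theory.
Import numFieldNormedType.Exports.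
Local Open Scope classical_set_scope.
Local Open Scope ring_scope.

Section powR_tail_integral.
Context {R : realType}.

Lemma is_derive_powR_shift (c p x : R) : 0 < x + c ->
  is_derive x 1 (fun y => (y + c) `^ p) (p * (x + c) `^ (p - 1)).
Proof.
move=> xc_gt0.
have [dshift shiftE] := @is_derive_shift R x 1 c.
have [dpow powE] := is_derive1_powR p xc_gt0.
have dcomp : derivable ((@powR R ^~ p) \o shift c) x 1.
  by apply/derivable1_diffP; apply: differentiable_comp; exact/derivable1_diffP.
split=> //.
by have := derive1_comp dshift dpow; rewrite !derive1E powE shiftE /= mulr1.
Qed.

Lemma cvg_powR_shift_pinfty (c p : R) : p < 0 -> (x + c) `^ p @[x --> +oo] --> 0.
Proof.
move=> p_lt0; apply/cvgr0Pnorm_lt => e e_gt0.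
pose M := e `^ p^-1.
have M_gt0 : 0 < M by rewrite powR_gt0.
near=> x.
have Mxc : M < x + c.
  by rewrite -ltrBlDr; near: x; apply: nbhs_pinfty_gt; rewrite num_real.
have xc_gt0 : 0 < x + c by rewrite (lt_trans M_gt0).
have -> : e = M `^ p by rewrite /M -powRrM mulVf ?lt_eqF // powRr1 ?ltW.
have powRE z : z `^ p = (z `^ (- p))^-1 by rewrite -powRN opprK.
rewrite ger0_norm ?powR_ge0 // !powRE ltf_pV2 ?posrE ?powR_gt0 //.
by apply: gt0_ltr_powR; rewrite ?oppr_gt0 ?nnegrE ?ltW.
Unshelve. all: by end_near. Qed.

Lemma integral_powR_shift (c a : R) : 0 < c -> 1 < a ->
  (\int[@lebesgue_measure R]_(x in `[0%R, +oo[) ((x + c) `^ (- a))%:E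
    = (c `^ (1 - a) / (a - 1))%:E)%E.
Proof.
move=> c_gt0 a_gt1.
have a1_neq0 : 1 - a != 0 by rewrite subr_eq0 lt_eqF.
pose F x := (1 - a)^-1 * (x + c) `^ (1 - a).
have dF x : 0 < x + c -> is_derive x 1 F ((x + c) `^ (- a)).
  move=> xc_gt0; apply: is_derive_eq; first exact/is_deriveZ/is_derive_powR_shift.
  by rewrite [_ *: _]mulrA mulVf // mul1r addrAC subrr add0r.
have xc_gt0 x : 0 <= x -> 0 < x + c by move=> x_ge0; rewrite ltr_wpDl.
rewrite (@ge0_continuous_FTC2y R _ F 0 0).
- by rewrite /F !add0r -EFinN mulrC -mulrN -invrN opprB.
- by move=> x _; rewrite powR_ge0.
- apply: continuous_in_subspaceT => x; rewrite inE /= in_itv /= andbT => x_ge0.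
  apply/differentiable_continuous/derivable1_diffP.
  by have [] := is_derive_powR_shift _ (- a) _ (xc_gt0 _ x_ge0).
- rewrite -(mulr0 (1 - a)^-1); apply: cvgMl_tmp.
  by apply: cvg_powR_shift_pinfty; rewrite subr_lt0.
- by move=> x x_gt0; have [] := dF x (xc_gt0 _ (ltW x_gt0)).
- apply/cvg_at_right_filter/differentiable_continuous/derivable1_diffP.
  by have [] := dF 0 (xc_gt0 _ (lexx 0)).
- move=> x; rewrite in_itv /= andbT => x_gt0.
  by have [_ <-] := dF x (xc_gt0 _ (ltW x_gt0)); rewrite derive1E.
Qed.

End powR_tail_integral.

Lemma heavy_cdf_tail (R : realType) (D : heavy_dist) (a y : R) : 1 <= y ->
  1 - heavy_cdf D a y <= y `^ (- a).
Proof.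
move=> y_ge1; case: D => /=; first by rewrite y_ge1 subKr.
by rewrite (lt_le_trans ltr01 y_ge1) lerBlDr -lerBlDl expR_ge1Dx.
Qed.

Section heavy_tails.
Context {R : realType} {d0 : measure_display} {T : measurableType d0}.
Variable P : probability T R.

Lemma heavy_tail_prob (D : heavy_dist) (a y : R) (X : T -> R) :
  measurable_fun setT X ->
  (forall x, P [set w | X w <= x] = (heavy_cdf D a x)%:E) ->
  1 <= y -> (P [set w | (y < X w)%R] <= (y `^ (- a))%:E)%E.
Proof.
move=> mX cdfX y_ge1.
have -> : [set w : T | y < X w] = ~` [set w | X w <= y].
  by apply/seteqP; split=> w /=; rewrite ltNge => /negP.
rewrite probability_setC ?cdfX ?lee_fin ?heavy_cdf_tail //.
by rewrite -[X in measurable X]setTI; apply: measurable_fun_le.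
Qed.

Lemma integral_excess_le (X : T -> R) (a c : R) : 1 < a -> 0 < c ->
  measurable_fun setT X ->
  (forall y, c <= y -> (P [set w | (y < X w)%R] <= (y `^ (- a))%:E)%E) ->
  (\int[P]_w (Num.max (X w - c) 0)%:E <= (c `^ (1 - a) / (a - 1))%:E)%E.
Proof.
move=> a_gt1 c_gt0 mX tailX.
have mY : (fun w => Num.max (X w - c) 0) \in mfun.
  by rewrite inE; apply: measurable_maxr => //; apply: measurable_funB.
pose Y : {RV P >-> R} := mfun_Sub mY.
have Y_ge0 w : 0 <= Y w by rewrite /Y mfun_valP le_max lexx orbT.
have := ge0_expectation_ccdf Y_ge0; rewrite expectation_def /Y mfun_valP => ->.
rewrite -(integral_powR_shift c a c_gt0 a_gt1).
apply: ge0_le_integral => //.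
- exact: measurable_funTS (ccdf_measurable _).
- apply/measurable_EFinP/measurable_funTS.
  by apply: measurableT_comp (measurable_powR _) _; apply: measurable_funD.
move=> r; rewrite /= in_itv /= andbT => r_ge0.
rewrite /ccdf /distribution /pushforward.
have -> : Y @^-1` `]r, +oo[ = [set w | r + c < X w].
  apply/seteqP; split=> w;
    by rewrite /= in_itv /= andbT lt_max (ltNge r 0) r_ge0 orbF ltrBrDr.
by apply: tailX; rewrite lerDr.
Qed.

Lemma integral_heavy_excess_le (D : heavy_dist) (a c : R) (X : T -> R) :
  1 < a -> 1 <= c -> measurable_fun setT X ->
  (forall x, P [set w | X w <= x] = (heavy_cdf D a x)%:E) ->
  (\int[P]_w (Num.max (X w - c) 0)%:E <= (c `^ (1 - a) / (a - 1))%:E)%E.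
Proof.
move=> a_gt1 c_ge1 mX cdfX.
apply: integral_excess_le => //; first exact: lt_le_trans ltr01 c_ge1.
by move=> y c_le_y; apply: heavy_tail_prob => //; exact: le_trans c_ge1 c_le_y.
Qed.

End heavy_tails.

Section subset_sums.
Context {R : realType} {I : finType}.

Lemma sum_le_card_excess (A : {set I}) (r : I -> R) (c : R) :
  \sum_(i in A) r i <= #|A|%:R * c + \sum_i Num.max (r i - c) 0.
Proof.
have excess_ge0 i : 0 <= Num.max (r i - c) 0 by rewrite le_max lexx orbT.
have r_le i : r i <= c + Num.max (r i - c) 0 by rewrite -lerBlDl le_max lexx.
apply: le_trans (ler_sum _ (fun i _ => r_le i)) _.
rewrite big_split /= sumr_const mulr_natl lerD2l.
by rewrite [leRHS](bigID [in A]) /= lerDl sumr_ge0.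
Qed.

Lemma maxr0_optimal_sum (S : pred {set I}) (A : {set I}) (r : I -> R) :
  S A -> (forall B, S B -> \sum_(i in B) r i <= \sum_(i in A) r i) ->
  Num.max (\sum_(i in A) r i) 0 = \big[Num.max/0]_(B | S B) \sum_(i in B) r i.
Proof.
move=> SA A_opt; apply/eqP; rewrite eq_le; apply/andP; split.
  rewrite ge_max bigmax_ge_id andbT.
  by apply: (le_bigmax_seq _ A) => //; exact: mem_index_enum.
by apply: bigmax_le => [|B SB]; rewrite le_max ?lexx ?orbT ?A_opt.
Qed.

End subset_sums.

Section integral_bounds.
Context {R : realType} {d0 : measure_display} {T : measurableType d0}.

Lemma measurable_bigmaxr (J : Type) (s : seq J) (S : pred J) (D : set T)
    (F : J -> T -> R) :
  (forall j, measurable_fun D (F j)) ->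
  measurable_fun D (fun w => \big[Num.max/0]_(j <- s | S j) F j w).
Proof.
move=> mF; elim: s => [|j s IHs].
  by under eq_fun do rewrite big_nil; exact: measurable_cst.
under eq_fun do rewrite big_cons.
by case: (S j) => //; apply: measurable_maxr.
Qed.

Lemma measurable_maxr0_optimal_sum (I : finType) (S : pred {set I})
    (A : T -> {set I}) (r : I -> T -> R) :
  (forall i, measurable_fun setT (r i)) -> (forall w, S (A w)) ->
  (forall w B, S B -> \sum_(i in B) r i w <= \sum_(i in A w) r i w) ->
  measurable_fun setT (fun w => Num.max (\sum_(i in A w) r i w) 0).
Proof.
move=> mr SA A_opt.
rewrite (_ : (fun w => _) = fun w => \big[Num.max/0]_(B | S B) \sum_(i in B) r i w).
  apply: measurable_bigmaxr => B.
  by under eq_fun do rewrite -big_enum; exact: measurable_sum.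
by apply/funext => w; apply: maxr0_optimal_sum; [exact: SA | exact: A_opt].
Qed.

Lemma integral_le_ge0_majorant (mu : {measure set T -> \bar R}) (f g : T -> R) :
  measurable_fun setT (fun w => Num.max (f w) 0) -> measurable_fun setT g ->
  (forall w, 0 <= g w) -> (forall w, f w <= g w) ->
  (\int[mu]_w (f w)%:E <= \int[mu]_w (g w)%:E)%E.
Proof.
move=> mfpos mg g_ge0 f_le_g.
have fposE : (fun w => (f w)%:E)^\+%E = EFin \o (fun w => Num.max (f w) 0).
  by apply/funext => w; rewrite funeposE /= EFin_max.
rewrite integralE; apply: le_trans (leeB (lexx _) (integral_ge0 _ _)) _.
  by move=> w _; exact: funeneg_ge0.
rewrite sube0 fposE; apply: ge0_le_integral => //.
- by move=> w _; rewrite lee_fin le_max lexx orbT.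
- exact/measurable_EFinP.
- exact/measurable_EFinP.
- by move=> w _; rewrite lee_fin ge_max f_le_g g_ge0.
Qed.

Lemma integral_cst_add_sum (P : probability T R) (J : finType) (k : R)
    (h : J -> T -> R) :
  0 <= k -> (forall j, measurable_fun setT (h j)) -> (forall j w, 0 <= h j w) ->
  (\int[P]_w (k + \sum_j h j w)%:E = k%:E + \sum_j \int[P]_w (h j w)%:E)%E.
Proof.
move=> k_ge0 mh h_ge0.
under eq_integral do rewrite EFinD -sumEFin.
rewrite ge0_integralD //.
- rewrite integral_cst // [X in (_ * X)%E]probability_setT mule1 ge0_integral_sum //.
  + by move=> j; exact/measurable_EFinP.
  + by move=> j w _; rewrite lee_fin.
- by move=> w _; rewrite sume_ge0 // => j _; rewrite lee_fin.
- under eq_fun do rewrite sumEFin.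
  by apply/measurable_EFinP; apply: measurable_sum.
Qed.

End integral_bounds.

Lemma Gamma_ge0 (R : realType) (s : R) : 0 <= Gamma s.
Proof.
apply: fine_ge0; apply: integral_ge0 => t _.
by rewrite lee_fin mulr_ge0 ?powR_ge0 ?expR_ge0.
Qed.

Section threshold.
Context {R : realType}.

Lemma powR_ge1 (b p : R) : 1 <= b -> 0 <= p -> 1 <= b `^ p.
Proof. by move=> b_ge1 p_ge0; rewrite -(powRr0 b) ler_powR. Qed.

Lemma threshold_bound (a m n k : R) : 1 < a -> 0 < m -> 0 < n -> 0 <= k <= n ->
  m * (n / m) `^ a^-1 + k * (((n / m) `^ a^-1) `^ (1 - a) / (a - 1))
    <= a / (a - 1) * m `^ (1 - a^-1) * n `^ a^-1.
Proof.
move=> a_gt1 m_gt0 n_gt0 /andP[k_ge0 k_le_n].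
have a_gt0 : 0 < a by apply: lt_trans a_gt1.
have a1_gt0 : 0 < a - 1 by rewrite subr_gt0.
set c := (n / m) `^ a^-1.
have c_gt0 : 0 < c by rewrite powR_gt0 ?divr_gt0.
have powR_c : c `^ (1 - a) = c * (m / n).
  rewrite powRD ?(gt_eqF c_gt0) ?implybT // powRr1 ?(ltW c_gt0) // -powRrM.
  by rewrite mulrN mulVf ?gt_eqF // powRN powRr1 ?invf_div // ltW ?divr_gt0.
have mc : m `^ (1 - a^-1) * n `^ a^-1 = m * c.
  rewrite powRB ?(gt_eqF m_gt0) ?implybT // powRr1 ?(ltW m_gt0) // /c.
  rewrite powRM ?ltW ?invr_gt0 //.
  by rewrite -[m^-1](powR_inv1 (ltW m_gt0)) -powRrM mulN1r powRN; ring.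
rewrite -mulrA mc powR_c.
have -> : a / (a - 1) * (m * c) = m * c + m * c / (a - 1) by field; rewrite gt_eqF.
rewrite lerD2l.
have -> : k * (c * (m / n) / (a - 1)) = (k / n) * (m * c / (a - 1)).
  by field; rewrite !gt_eqF.
apply: ler_piMl; first by rewrite divr_ge0 ?mulr_ge0 ?ltW.
by rewrite ler_pdivrMr // mul1r.
Qed.

End threshold.

Theorem lemma9 (R : realType) (D : heavy_dist) (alpha : R) (d m : nat)
  (d0 : measure_display) (T : measurableType d0) (P : probability T R)
  (r1 : 'I_d -> T -> R) (a1 : T -> {set 'I_d}) :
  1 < alpha -> (1 <= m)%N -> (m <= d)%N ->
  (forall i, measurable_fun setT (r1 i)) ->
  mutually_independent P r1 ->
  (forall i (x : R), P [set w | r1 i w <= x] = (heavy_cdf D alpha x)%:E) ->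
  (forall w, in_action_set m (a1 w)) ->
  (forall w, forall a, in_action_set m a ->
     inner_ind (a1 w) (fun i => - r1 i w) <= inner_ind a (fun i => - r1 i w)) ->
  (\int[P]_w (inner_ind (a1 w) (fun i => r1 i w))%:E <=
   ((alpha / (alpha - 1) * m%:R `^ (1 - alpha^-1) + Gamma (1 - alpha^-1))
      * (d.+1)%:R `^ (alpha^-1)
    + (if D is Frechet then m%:R else 0))%:E)%E.
Proof.
move=> alpha_gt1 m_ge1 m_le_d r1_meas _ r1_cdf a1_card a1_opt.
have m_gt0 : 0 < m%:R :> R by rewrite ltr0n.
set c := ((d.+1)%:R / m%:R) `^ alpha^-1.
have c_ge1 : 1 <= c.
  apply: powR_ge1; last by rewrite invr_ge0 ltW // (lt_trans ltr01).
  by rewrite ler_pdivlMr // mul1r ler_nat; apply: leqW.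
have excess_meas i : measurable_fun setT (fun w => Num.max (r1 i w - c) 0).
  by apply: measurable_maxr => //; apply: measurable_funB.
have excess_ge0 i w : 0 <= Num.max (r1 i w - c) 0 by rewrite le_max lexx orbT.
apply: (@le_trans _ _ (\int[P]_w (m%:R * c + \sum_i Num.max (r1 i w - c) 0)%:E)%E).
  apply: integral_le_ge0_majorant.
  - apply: (measurable_maxr0_optimal_sum _ _ _ _ r1_meas a1_card) => w B.
    by move=> /(a1_opt w); rewrite /inner_ind !sumrN lerN2.
  - by apply: measurable_funD => //; exact: measurable_sum.
  - by move=> w; rewrite addr_ge0 ?sumr_ge0 ?mulr_ge0 ?ler0n ?(le_trans ler01).
  - by move=> w; rewrite -(eqP (a1_card w)); exact: sum_le_card_excess.
rewrite integral_cst_add_sum ?mulr_ge0 ?ler0n ?(le_trans ler01) //.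
apply: (@le_trans _ _
  ((m%:R * c)%:E + \sum_(i < d) (c `^ (1 - alpha) / (alpha - 1))%:E)%E).
  apply: leeD2l; apply: lee_sum => i _.
  exact: integral_heavy_excess_le _ _ _ _ _ alpha_gt1 c_ge1 (r1_meas i) (r1_cdf i).
rewrite sumEFin -EFinD lee_fin sumr_const card_ord -[_ *+ d]mulr_natl.
apply: le_trans (threshold_bound _ _ _ _ alpha_gt1 m_gt0 _ _) _.
- by rewrite ltr0n.
- by rewrite ler0n ler_nat /=.
rewrite mulrDl -addrA lerDl addr_ge0 ?mulr_ge0 ?powR_ge0 ?Gamma_ge0 //.
by case: D r1_cdf.
Qed.
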